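(* Let $\mathcal{J}$ be a finite set, $\mathcal{J}_0=\mathcal{J}\cup\{0\}$, $(\Omega,P)$ a Borel probability space and $\mathcal{U}:\Omega\times\mathcal{J}_0\times\mathbb{R}\to\mathbb{R}$ satisfying the regularity and no-indifference assumptions in the context. Let $s,s'$ be probability vectors on $\mathcal{J}_0$ with $s\le s'$ (i.e. $s_j\le s'_j$ for all $j\in\mathcal{J}$). If $\delta\in\tilde\sigma^{-1}(s)$ and $\delta'\in\tilde\sigma^{-1}(s')$, then $\delta\wedge\delta'\in\tilde\sigma^{-1}(s)$ and $\delta\vee\delta'\in\tilde\sigma^{-1}(s')$, where $(\delta\wedge\delta')_j=\min\{\delta_j,\delta'_j\}$ and $(\delta\vee\delta')_j=\max\{\delta_j,\delta'_j\}$. That is, $s\mapsto\tilde\sigma^{-1}(s)$ is isotone in Veinott's strong set order.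
   Context: Assumption (regularity): for every $j\in\mathcal{J}_0$ and $\delta\in\mathbb{R}$ the map $\varepsilon\mapsto\mathcal{U}_{\varepsilon j}(\delta)$ is measurable, and for every $\varepsilon$, $j$ the map $\delta\mapsto\mathcal{U}_{\varepsilon j}(\delta)$ is increasing and continuous. Assumption (no indifference): for all distinct $j,j'\in\mathcal{J}_0$ and all $\delta,\delta'\in\mathbb{R}$, $P(\varepsilon:\mathcal{U}_{\varepsilon j}(\delta)=\mathcal{U}_{\varepsilon j'}(\delta'))=0$. For $\delta\in\mathbb{R}^{\mathcal{J}_0}$, $\sigma_j(\delta)=P(\varepsilon:\mathcal{U}_{\varepsilon j}(\delta_j)\ge\max_{j'\in\mathcal{J}_0}\mathcal{U}_{\varepsilon j'}(\delta_{j'}))$. For $\delta\in\mathbb{R}^{\mathcal{J}}$, $\tilde\sigma(\delta)=\sigma((0,\delta))$ (normalization $\delta_0=0$), and $\tilde\sigma^{-1}(s)=\{\delta\in\mathbb{R}^{\mathcal{J}}:\tilde\sigma(\delta)=s\}$. *)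

From HB Require Import structures.
From mathcomp Require Import all_boot all_order all_algebra.
From mathcomp Require Import all_classical all_reals all_analysis.
Set Implicit Arguments. Unset Strict Implicit. Unset Printing Implicit Defensive.
Import Order.TTheory GRing.Theory Num.Theory.
Import numFieldNormedType.Exports.
Local Open Scope classical_set_scope.
Local Open Scope ring_scope.

(* J0 = J ∪ {0} is modelled as [option J]; [None] is the outside option 0. *)

Section Shares.
Context {d : measure_display} {Omega : measurableType d} {R : realType}.
Context {J : finType}.

Definition regular (U : Omega -> option J -> R -> R) : Prop :=
  (forall (j : option J) (delta : R), measurable_fun setT (fun e => U e j delta)) /\
  (forall (e : Omega) (j : option J),
      {homo (U e j) : x y / x <= y} /\ continuous (U e j)).

Definition no_indifference (P : probability Omega R)
  (U : Omega -> option J -> R -> R) : Prop :=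
  forall (j j' : option J) (delta delta' : R), j <> j' ->
    P [set e | U e j delta = U e j' delta'] = 0%E.

Definition sigma (P : probability Omega R) (U : Omega -> option J -> R -> R)
  (delta : option J -> R) (j : option J) : \bar R :=
  P [set e | forall j' : option J, U e j' (delta j') <= U e j (delta j)].

Definition ext0 (delta : J -> R) : option J -> R :=
  fun j => match j with Some i => delta i | None => 0 end.

Definition sigma_tilde P U (delta : J -> R) : option J -> \bar R :=
  sigma P U (ext0 delta).

Definition in_sigma_tilde_inv P U (s : option J -> R) (delta : J -> R) : Prop :=
  forall j : option J, sigma_tilde P U delta j = (s j)%:E.

Definition prob_vector (s : option J -> R) : Prop :=
  (forall j, 0 <= s j) /\ \sum_(j : option J) s j = 1.

End Shares.

Definition vmin {J : finType} {R : realType} (a b : J -> R) : J -> R :=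
  fun j => Num.min (a j) (b j).
Definition vmax {J : finType} {R : realType} (a b : J -> R) : J -> R :=
  fun j => Num.max (a j) (b j).

From HB Require Import structures.
From mathcomp Require Import all_boot all_order all_algebra.
From mathcomp Require Import all_classical all_reals all_analysis.
Import Order.TTheory GRing.Theory Num.Theory.
Local Open Scope ring_scope.
Local Open Scope classical_set_scope.

(* The events "alternative j is a best choice" cover Omega and, by no
   indifference, overlap only on a null set, so every share vector sigma(dl)
   sums to 1.  The share of j increases with dl j and decreases with the other
   coordinates.  In coordinate j, delta /\ delta' agrees with delta or with
   delta' and lies below both elsewhere, hence sigma_j(delta /\ delta') is at
   least s_j or s'_j >= s_j (the second case needs j <> 0, which holds since
   delta_0 = delta'_0 = 0).  A vector dominating the probability vector s and
   summing to 1 is s itself.  The join is dual. *)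

Lemma eq_of_le_sum (R : numDomainType) (I : finType) (x y : I -> R) :
  (forall i, x i <= y i) -> \sum_i y i <= \sum_i x i -> x =1 y.
Proof.
move=> lexy lesum i.
have [_] := @leif_sum R I predT (fun i => x i == y i) x y
  (fun i _ => leif_eq (lexy i)).
by rewrite eq_le lesum ler_sum // => /esym/forall_inP/(_ i isT)/eqP.
Qed.

Section Shares.
Context {d : measure_display} {Omega : measurableType d} {R : realType}.
Context {J : finType} {P : probability Omega R} {U : Omega -> option J -> R -> R}.
Hypothesis measurable_U : forall j a, measurable_fun setT (fun e => U e j a).
Hypothesis U_nondecreasing : forall e j, {homo U e j : x y / x <= y}.
Hypothesis no_tie : no_indifference P U.

Definition winners (dl : option J -> R) (j : option J) : set Omega :=
  [set e | forall j', U e j' (dl j') <= U e j (dl j)].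

Definition ties (dl : option J -> R) : set Omega :=
  \bigcup_(jk in [set jk : option J * option J | jk.1 != jk.2])
    [set e | U e jk.1 (dl jk.1) = U e jk.2 (dl jk.2)].

Lemma measurable_U_le j a k b : measurable [set e | U e j a <= U e k b].
Proof.
have := measurable_realfun.measurable_fun_ler (measurable_U j a)
  (measurable_U k b) measurableT (Y := [set true]) I.
by rewrite setTI.
Qed.

Lemma measurable_U_eq j a k b : measurable [set e | U e j a = U e k b].
Proof.
rewrite (_ : [set e | _ = _] =
  [set e | U e j a <= U e k b] `&` [set e | U e k b <= U e j a]).
  by apply: measurableI; exact: measurable_U_le.
by apply/seteqP; split=> e /= => [->|[? ?]] //; apply/le_anti/andP.
Qed.

Lemma measurable_winners dl j : measurable (winners dl j).
Proof.
rewrite (_ : winners dl j = \bigcap_(j' in [set: option J])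
  [set e | U e j' (dl j') <= U e j (dl j)]).
  by apply: fin_bigcap_measurable => // j' _; exact: measurable_U_le.
by apply/seteqP; split=> e /= h j' => [_|]; apply: h.
Qed.

Lemma measurable_ties dl : measurable (ties dl).
Proof.
apply: fin_bigcup_measurable => [|jk _]; first exact: finite_finset.
exact: measurable_U_eq.
Qed.

Local Open Scope ereal_scope.

Lemma le_sigma dl dl' j : (dl j <= dl' j)%R ->
    (forall k, k != j -> (dl' k <= dl k)%R) ->
  sigma P U dl j <= sigma P U dl' j.
Proof.
move=> lej lek; apply: le_measure; rewrite ?inE; try exact: measurable_winners.
move=> e /= win j'; have [->|nej] := eqVneq j' j.
  exact: U_nondecreasing.
apply: le_trans (U_nondecreasing e j' _ _ (lek _ nej)) _.
exact: le_trans (win j') (U_nondecreasing e j _ _ lej).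
Qed.

Lemma ties_null dl : P (ties dl) = 0.
Proof.
apply/eqP; rewrite -measure_le0.
have := content_sub_fsum P finite_finset
  (fun jk _ => measurable_U_eq jk.1 (dl jk.1) jk.2 (dl jk.2))
  (measurable_ties dl) (@subset_refl _ (ties dl)).
by rewrite fsbig1 // => jk /= /eqP; exact: no_tie.
Qed.

Lemma winners_cover dl : \bigcup_(j in [set: option J]) winners dl j = setT.
Proof.
apply/seteqP; split=> // e _.
have [j _ jmax] := @arg_maxP _ _ _ None predT (fun j => U e j (dl j)) isT.
by exists j => // j'; exact: jmax.
Qed.

Lemma trivIset_winners_ties dl :
  trivIset setT (fun j => winners dl j `\` ties dl).
Proof.
move=> j k _ _ [e [[win_j notie] [win_k _]]].
apply: contra_notP notie => /eqP nejk.
exists (j, k) => //=; exact/le_anti/andP.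
Qed.

Lemma sum_sigma dl : \sum_(j : option J) sigma P U dl j = 1.
Proof.
have sigma_ties j : sigma P U dl j = P (winners dl j `\` ties dl).
  rewrite [LHS](measureDI P (measurable_winners dl j) (measurable_ties dl)).
  have mwt := measurableI _ _ (measurable_winners dl j) (measurable_ties dl).
  by rewrite (subset_measure0 mwt (measurable_ties dl) (@subIsetr _ _ _)
    (ties_null dl)) adde0.
under eq_bigr do rewrite sigma_ties.
rewrite fsbig_seq ?index_enum_uniq // (_ : [set` _] = setT); last first.
  by apply/seteqP; split=> // j _; rewrite /= mem_index_enum.
rewrite -measure_fin_bigcup; last 3 first.
- exact: finite_finset.
- exact: trivIset_winners_ties.
- by move=> j _; apply: measurableD;
    [exact: measurable_winners|exact: measurable_ties].
rewrite -(setD_bigcupl (winners dl)) winners_cover setTD.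
rewrite -[RHS]sube0 -(ties_null dl); exact: probability_setC (measurable_ties dl).
Qed.

Lemma fine_sigmaK dl j : (fine (sigma P U dl j))%:E = sigma P U dl j.
Proof.
rewrite fineK // ge0_fin_numE ?measure_ge0 //.
exact: le_lt_trans (probability_le1 P (measurable_winners dl j)) (ltry 1).
Qed.

Lemma sum_fine_sigma dl : (\sum_(j : option J) fine (sigma P U dl j))%R = 1%R.
Proof.
by apply: EFin_inj; rewrite -sumEFin; under eq_bigr do rewrite fine_sigmaK;
  exact: sum_sigma.
Qed.

Lemma sigma_eq_of_ge dl (s : option J -> R) : (\sum_j s j)%R = 1%R ->
  (forall j, (s j)%:E <= sigma P U dl j) -> forall j, sigma P U dl j = (s j)%:E.
Proof.
move=> sum1 ge j; rewrite -fine_sigmaK; congr EFin; apply/esym.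
apply: (@eq_of_le_sum _ _ s (fun k => fine (sigma P U dl k))) => [k|].
  by rewrite -lee_fin fine_sigmaK.
by rewrite sum_fine_sigma sum1.
Qed.

Lemma sigma_eq_of_le dl (s : option J -> R) : (\sum_j s j)%R = 1%R ->
  (forall j, sigma P U dl j <= (s j)%:E) -> forall j, sigma P U dl j = (s j)%:E.
Proof.
move=> sum1 le j; rewrite -fine_sigmaK; congr EFin.
apply: (@eq_of_le_sum _ _ (fun k => fine (sigma P U dl k)) s) => [k|].
  by rewrite -lee_fin fine_sigmaK.
by rewrite sum_fine_sigma sum1.
Qed.

Lemma ext0_vmin (delta delta' : J -> R) :
  ext0 (vmin delta delta') = ext0 delta \min ext0 delta'.
Proof. by apply/funext => -[i|] //=; rewrite minxx. Qed.

Lemma ext0_vmax (delta delta' : J -> R) :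
  ext0 (vmax delta delta') = ext0 delta \max ext0 delta'.
Proof. by apply/funext => -[i|] //=; rewrite maxxx. Qed.

Section Lattice.
Variables (s s' : option J -> R) (delta delta' : J -> R).
Hypothesis s_le : forall j : J, (s (Some j) <= s' (Some j))%R.
Hypothesis delta_s : in_sigma_tilde_inv P U s delta.
Hypothesis delta'_s' : in_sigma_tilde_inv P U s' delta'.

Lemma sigma_tilde_vmin_ge j : (s j)%:E <= sigma_tilde P U (vmin delta delta') j.
Proof.
rewrite /sigma_tilde ext0_vmin.
have [le|lt] := leP (ext0 delta j) (ext0 delta' j).
  rewrite -delta_s; apply: le_sigma => [|k _] /=; first by rewrite (min_l le).
  by rewrite ge_min lexx.
case: j lt => [i /ltW le|]; last by rewrite ltxx.
apply: le_trans (_ : (s' (Some i))%:E <= _); first by rewrite lee_fin.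
rewrite -delta'_s'; apply: le_sigma => [|k _] /=; first by rewrite (min_r le).
by rewrite ge_min lexx orbT.
Qed.

Lemma sigma_tilde_vmax_le j : sigma_tilde P U (vmax delta delta') j <= (s' j)%:E.
Proof.
rewrite /sigma_tilde ext0_vmax.
have [le|lt] := leP (ext0 delta j) (ext0 delta' j).
  rewrite -delta'_s'; apply: le_sigma => [|k _] /=; first by rewrite (max_r le).
  by rewrite le_max lexx orbT.
case: j lt => [i /ltW le|]; last by rewrite ltxx.
apply: le_trans (_ : _ <= (s (Some i))%:E) _; last by rewrite lee_fin.
rewrite -delta_s; apply: le_sigma => [|k _] /=; first by rewrite (max_l le).
by rewrite le_max lexx.
Qed.

End Lattice.

End Shares.

Theorem theorem2 (d : measure_display) (Omega : measurableType d) (R : realType)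
  (J : finType) (P : probability Omega R) (U : Omega -> option J -> R -> R)
  (hreg : regular U) (hnoind : no_indifference P U)
  (s s' : option J -> R) (hs : prob_vector s) (hs' : prob_vector s')
  (hle : forall j : J, s (Some j) <= s' (Some j))
  (delta delta' : J -> R)
  (hd : in_sigma_tilde_inv P U s delta) (hd' : in_sigma_tilde_inv P U s' delta') :
  in_sigma_tilde_inv P U s (vmin delta delta') /\
  in_sigma_tilde_inv P U s' (vmax delta delta').
Proof.
have [measurable_U U_mono_cont] := hreg.
have U_nondecreasing e j := (U_mono_cont e j).1.
split.
- apply: (sigma_eq_of_ge measurable_U hnoind _ _ hs.2).
  exact: sigma_tilde_vmin_ge measurable_U U_nondecreasing _ _ _ _ hle hd hd'.
- apply: (sigma_eq_of_le measurable_U hnoind _ _ hs'.2).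
  exact: sigma_tilde_vmax_le measurable_U U_nondecreasing _ _ _ _ hle hd hd'.
Qed.
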